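(* Let $A\subset\mathbb{R}^N$ be nonempty and closed, let $H:[0,\infty)\times\mathbb{R}^N\times\mathbb{R}^N\to\mathbb{R}$, and let $(U,f,l)$ be a triple satisfying $(h)''$ relative to $A$ which is a representation of $H$, i.e. $H(t,x,p)=\sup_{u\in U(t)}\{\langle p,f(t,x,u)\rangle-l(t,x,u)\}$ for all $t,x,p$. Then a function $W:[0,\infty)\times A\to\mathbb{R}\cup\{+\infty\}$ is a weak solution of $-W_t+H(t,x,-W_x)=0$ on $(0,\infty)\times A$ in the sense of Definition I if and only if it is a weak solution in the sense of Definition II.
   Context: $H^*(t,x,v)=\sup_{p}\{\langle v,p\rangle-H(t,x,p)\}$, $\mathrm{dom}\,H^*(t,x,\cdot)=\{v:H^*(t,x,v)<+\infty\}$. $\mathrm{bd}A,\mathrm{int}A$ are boundary and interior. $W$ is viewed as a function on $\mathbb{R}\times\mathbb{R}^N$ equal to $+\infty$ outside $[0,\infty)\times A$; $\mathrm{dom}\,W=\{W<+\infty\}$, $\mathrm{epi}\,W$ its epigraph. For $\varphi:\mathbb{R}^d\to\mathbb{R}\cup\{+\infty\}$ and $z\in\mathrm{dom}\,\varphi$, $\partial\varphi(z)=\{p:\liminf_{y\to z}(\varphi(y)-\varphi(z)-\langle p,y-z\rangle)/|y-z|\ge0\}$. For $C\subset\mathbb{R}^d$, $T_C(z)=\{\zeta:\liminf_{\tau\to0+}\mathrm{dist}(z+\tau\zeta,C)/\tau=0\}$ and $N_C(z)=\{\xi:\langle\zeta,\xi\rangle\le0\ \forall\zeta\in T_C(z)\}$.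 Definition I: a lower semicontinuous $W:[0,\infty)\times A\to\mathbb{R}\cup\{+\infty\}$ is a weak solution if there is a set $C\subset(0,\infty)$ of full measure such that for all $(t,x)\in\mathrm{dom}W\cap(C\times\mathrm{bd}A)$: $-p_t+H(t,x,-p_x)\ge0$ for all $(p_t,p_x)\in\partial W(t,x)$ and $-p_t+\sup_{v\in\mathrm{dom}H^*(t,x,\cdot)}\langle v,-p_x\rangle\ge0$ for all $(p_t,p_x,0)\in N_{\mathrm{epi}W}(t,x,W(t,x))$; and for all $(t,x)\in\mathrm{dom}W\cap(C\times\mathrm{int}A)$ the same two relations hold with equality. Definition II: with $\bar H(t,x,p,q)=\sup_{u\in U(t)}\{\langle p,f(t,x,u)\rangle-q\,l(t,x,u)\}$, a lower semicontinuous $W$ is a weak solution if there is a set $C\subset(0,\infty)$ of full measure such that $-p_t+\bar H(t,x,-p_x,-q)\ge0$ for all $(p_t,p_x,q)\in N_{\mathrm{epi}W}(t,x,W(t,x))$ and all $(t,x)\in\mathrm{dom}W\cap(C\times\mathrm{bd}A)$, and $-p_t+\bar H(t,x,-p_x,-q)=0$ for all such normals and all $(t,x)\in\mathrm{dom}W\cap(C\times\mathrm{int}A)$. Condition $(h)''$ relative to $A$: $U:[0,\infty)\rightsquigarrow\mathbb{R}^M$ measurable with nonempty closed images; $f:[0,\infty)\times\mathbb{R}^N\times\mathbb{R}^M\to\mathbb{R}^N$, $l:[0,\infty)\times\mathbb{R}^N\times\mathbb{R}^M\to\mathbb{R}$ with (h1) measurability in $t$, continuity in $(x,u)$, and $l\ge\phi(t)$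 for some $\phi\in L^1([0,\infty);\mathbb{R})$; (h2) $|f|+|l|\le c(t)(1+|x|)$ on $u\in U(t)$, $c\in L^1_{\rm loc}([0,\infty);[0,\infty))$; (h3) $x\rightsquigarrow(f,l)(t,x,U(t))$ Hausdorff-continuous with closed images; (h4) $\{(f(t,x,u),l(t,x,u)+r):u\in U(t),r\ge0\}$ convex; (h5) $|f|+|l|\le q(t)$ for $x\in\mathrm{bd}A$, $u\in U(t)$; (h6) $|f(t,x,u)-f(t,y,u)|+|l(t,x,u)-l(t,y,u)|\le k(t)|x-y|$ for $u\in U(t)$; here $k,q\in\mathscr{L}_{\rm loc}$, the set of $\varphi\in L^1_{\rm loc}([0,\infty);[0,\infty))$ with $\lim_{\sigma\to0}\sup\{\int_I\varphi: I$ compact interval of length $\le\sigma\}=0$. *)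

From HB Require Import structures.
From mathcomp Require Import all_boot all_order all_algebra.
From mathcomp Require Import all_classical all_reals all_analysis.

Set Implicit Arguments.
Unset Strict Implicit.
Unset Printing Implicit Defensive.
Import Order.TTheory GRing.Theory Num.Theory.
Import numFieldNormedType.Exports.
Local Open Scope classical_set_scope.
Local Open Scope ring_scope.

Section Defs.
Variable R : realType.

Definition dotv {d} (p v : 'rV[R]_d) : R := \sum_(i < d) p 0 i * v 0 i.
Definition enorm {d} (v : 'rV[R]_d) : R := Num.sqrt (dotv v v).

(* Lebesgue (= completed) measurable structure on R and Lebesgue measure *)
Definition Lreal := caratheodory_type (R:=R)
  (T:=lebesgue_stieltjes_measure_ocitv_type__canonical__measurable_structure_SemiRingOfSets R)
  (wlength idfun)^*%mu.
Definition Lmu : set Lreal -> \bar R := @completed_lebesgue_measure R.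

Definition Lmeasurable_set (S : set R) := measurable (S : set Lreal).
Definition Lmeasurable_fun (D : set R) (g : R -> R) :=
  measurable_fun (D : set Lreal) (g : Lreal -> R).

Definition L1 (phi : R -> R) :=
  Lmu.-integrable (`[0, +oo[%classic : set Lreal) (EFin \o phi).
Definition L1loc_nonneg (c : R -> R) :=
  (forall t, 0 <= t -> 0 <= c t) /\
  forall T, 0 <= T -> Lmu.-integrable (`[0, T]%classic : set Lreal) (EFin \o c).
Definition scrLloc (phi : R -> R) :=
  L1loc_nonneg phi /\
  forall e, 0 < e -> exists2 s, 0 < s & forall a b, 0 <= a -> a <= b -> b - a <= s ->
    (\int[Lmu]_(t in (`[a, b]%classic : set Lreal)) (phi t)%:E <= e%:E)%E.

Definition full_measure_pos (C : set R) :=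
  C `<=` `]0, +oo[%classic /\
  Lmu.-negligible ((`]0, +oo[%classic `\` C) : set Lreal).

Definition meas_multifun {M} (U : R -> set 'rV[R]_M) :=
  forall O : set 'rV[R]_M, open O ->
    Lmeasurable_set [set t | 0 <= t /\ (U t `&` O) !=set0].

Definition bdry {N} (A : set 'rV[R]_N) := closure A `\` interior A.

Definition pair1 {d} (v : 'rV[R]_d) (r : R) : 'rV[R]_(d + 1) := row_mx v r%:M.
Definition pt2 {N} (t : R) (x : 'rV[R]_N) : 'rV[R]_(1 + N) := row_mx t%:M x.

Definition haus_close {d} (X Y : set 'rV[R]_d) (e : R) :=
  (forall a, X a -> exists2 b, Y b & enorm (a - b) < e) /\
  (forall b, Y b -> exists2 a, X a & enorm (b - a) < e).
Definition haus_continuous {N d} (G : 'rV[R]_N -> set 'rV[R]_d) :=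
  forall x e, 0 < e -> exists2 dl, 0 < dl &
    forall y, enorm (y - x) < dl -> haus_close (G x) (G y) e.

Definition convexS {d} (S : set 'rV[R]_d) :=
  forall a b lam, S a -> S b -> 0 <= lam <= 1 -> S (lam *: a + (1 - lam) *: b).

Section Hyp.
Variables (N M : nat) (A : set 'rV[R]_N) (U : R -> set 'rV[R]_M)
  (f : R -> 'rV[R]_N -> 'rV[R]_M -> 'rV[R]_N) (l : R -> 'rV[R]_N -> 'rV[R]_M -> R).

Definition hU := meas_multifun U /\
  forall t, 0 <= t -> U t !=set0 /\ closed (U t).

Definition h1 :=
  [/\ (forall x u (i : 'I_N), Lmeasurable_fun `[0, +oo[%classic (fun t => f t x u 0 i)),
      (forall x u, Lmeasurable_fun `[0, +oo[%classic (fun t => l t x u)),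
      (forall t, 0 <= t ->
         continuous (fun xu : 'rV[R]_N * 'rV[R]_M => f t xu.1 xu.2) /\
         continuous (fun xu : 'rV[R]_N * 'rV[R]_M => l t xu.1 xu.2)) &
      (exists2 phi, L1 phi & forall t x u, 0 <= t -> U t u -> phi t <= l t x u)].

Definition h2 := exists2 c, L1loc_nonneg c &
  forall t x u, 0 <= t -> U t u -> enorm (f t x u) + `|l t x u| <= c t * (1 + enorm x).

Definition fl_image (t : R) (x : 'rV[R]_N) : set 'rV[R]_(N + 1) :=
  [set pair1 (f t x u) (l t x u) | u in U t].

Definition h3 := forall t, 0 <= t ->
  haus_continuous (fl_image t) /\ forall x, closed (fl_image t x).

Definition h4 := forall t x, 0 <= t ->
  convexS [set w | exists u r, [/\ U t u, 0 <= r & w = pair1 (f t x u) (l t x u + r)]].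

Definition h5 := exists2 q, scrLloc q &
  forall t x u, 0 <= t -> bdry A x -> U t u -> enorm (f t x u) + `|l t x u| <= q t.

Definition h6 := exists2 k, scrLloc k &
  forall t x y u, 0 <= t -> U t u ->
    enorm (f t x u - f t y u) + `|l t x u - l t y u| <= k t * enorm (x - y).

Definition hpp := hU /\ h1 /\ h2 /\ h3 /\ h4 /\ h5 /\ h6.
End Hyp.

Definition representation {N M} (H : R -> 'rV[R]_N -> 'rV[R]_N -> R)
  (U : R -> set 'rV[R]_M) (f : R -> 'rV[R]_N -> 'rV[R]_M -> 'rV[R]_N)
  (l : R -> 'rV[R]_N -> 'rV[R]_M -> R) :=
  forall t x p, 0 <= t ->
    (H t x p)%:E = ereal_sup [set (dotv p (f t x u) - l t x u)%:E | u in U t].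

(* Frechet subdifferential: liminf_{y->z} (phi y - phi z - <p,y-z>)/|y-z| >= 0 *)
Definition subdiff {d} (phi : 'rV[R]_d -> \bar R) (z p : 'rV[R]_d) :=
  forall e, 0 < e -> exists2 dl, 0 < dl & forall y, 0 < enorm (y - z) < dl ->
    ((- e * enorm (y - z))%:E <= phi y - phi z - (dotv p (y - z))%:E)%E.

(* contingent cone: liminf_{tau->0+} dist(z + tau zeta, C)/tau = 0 *)
Definition tangent_cone {d} (C : set 'rV[R]_d) (z zeta : 'rV[R]_d) :=
  forall e dl : R, 0 < e -> 0 < dl -> exists tau : R, (0 < tau < dl) /\
    (exists2 c, C c & enorm (z + tau *: zeta - c) < e * tau).

Definition normal_cone {d} (C : set 'rV[R]_d) (z xi : 'rV[R]_d) :=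
  forall zeta, tangent_cone C z zeta -> dotv zeta xi <= 0.

Definition epi {d} (g : 'rV[R]_d -> \bar R) : set 'rV[R]_(d + 1) :=
  [set w | (g (lsubmx w) <= (rsubmx w 0 0)%:E)%E].

Definition Wext {N} (A : set 'rV[R]_N) (W : R -> 'rV[R]_N -> \bar R)
  (z : 'rV[R]_(1 + N)) : \bar R :=
  if `[< 0 <= lsubmx z 0 0 /\ A (rsubmx z) >] then W (lsubmx z 0 0) (rsubmx z)
  else +oo%E.

Definition Hstar {N} (H : R -> 'rV[R]_N -> 'rV[R]_N -> R) t x (v : 'rV[R]_N) : \bar R :=
  ereal_sup [set (dotv v p - H t x p)%:E | p in [set: 'rV[R]_N]].
Definition domHstar {N} (H : R -> 'rV[R]_N -> 'rV[R]_N -> R) t x :=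
  [set v | (Hstar H t x v < +oo)%E].

Definition Hbar {N M} (U : R -> set 'rV[R]_M) (f : R -> 'rV[R]_N -> 'rV[R]_M -> 'rV[R]_N)
  (l : R -> 'rV[R]_N -> 'rV[R]_M -> R) t x (p : 'rV[R]_N) (q : R) : \bar R :=
  ereal_sup [set (dotv p (f t x u) - q * l t x u)%:E | u in U t].

Section Weak.
Variables (N : nat) (A : set 'rV[R]_N) (W : R -> 'rV[R]_N -> \bar R).
Let Wb := Wext A W.
Definition epi_pt (t : R) (x : 'rV[R]_N) : 'rV[R]_(1 + N + 1) :=
  row_mx (pt2 t x) (fine (Wb (pt2 t x)))%:M.

Definition weak_solution_I (H : R -> 'rV[R]_N -> 'rV[R]_N -> R) :=
  lower_semicontinuous Wb /\
  exists C, full_measure_pos C /\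
  forall t x, C t -> (Wb (pt2 t x) < +oo)%E ->
    (bdry A x ->
       (forall pt px, subdiff Wb (pt2 t x) (pt2 pt px) -> 0 <= - pt + H t x (- px)) /\
       (forall pt px, normal_cone (epi Wb) (epi_pt t x) (row_mx (pt2 pt px) 0) ->
          (0 <= (- pt)%:E + ereal_sup [set (dotv v (- px))%:E | v in domHstar H t x])%E)) /\
    (interior A x ->
       (forall pt px, subdiff Wb (pt2 t x) (pt2 pt px) -> - pt + H t x (- px) = 0) /\
       (forall pt px, normal_cone (epi Wb) (epi_pt t x) (row_mx (pt2 pt px) 0) ->
          ((- pt)%:E + ereal_sup [set (dotv v (- px))%:E | v in domHstar H t x] = 0)%E)).

Definition weak_solution_II {M} (U : R -> set 'rV[R]_M)
  (f : R -> 'rV[R]_N -> 'rV[R]_M -> 'rV[R]_N) (l : R -> 'rV[R]_N -> 'rV[R]_M -> R) :=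
  lower_semicontinuous Wb /\
  exists C, full_measure_pos C /\
  forall t x, C t -> (Wb (pt2 t x) < +oo)%E ->
    (bdry A x -> forall pt px q,
       normal_cone (epi Wb) (epi_pt t x) (row_mx (pt2 pt px) q%:M) ->
       (0 <= (- pt)%:E + Hbar U f l t x (- px) (- q))%E) /\
    (interior A x -> forall pt px q,
       normal_cone (epi Wb) (epi_pt t x) (row_mx (pt2 pt px) q%:M) ->
       ((- pt)%:E + Hbar U f l t x (- px) (- q) = 0)%E).
End Weak.

End Defs.

(* Both definitions impose sign conditions on the same normals (p_t, p_x, q) to epi W at
   (t, x, W(t, x)); they only group them differently.  Normal cones are cones, and q <= 0
   because (0, 1) is tangent to an epigraph.  For q < 0 one rescales to q = -1: (p, -1) is
   normal to epi phi at (z, phi z) exactly when p is a Frechet subgradient of phi at z (one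
   direction is a first-order estimate, the other uses compactness of the unit sphere), and
   Hbar(p, a) = a H(p / a) for a > 0 by the representation.  For q = 0,
   Hbar(p, 0) = sup_u <p, f(t,x,u)> is the support function of dom H^*: every f(t,x,u) lies
   in dom H^*, and if <v, p> exceeded that supremum then H^*(v) >= lam (<v,p> - sup) - H(t,x,0)
   for all lam >= 0. *)

From HB Require Import structures.
From mathcomp Require Import all_boot all_order all_algebra.
From mathcomp Require Import all_classical all_reals all_analysis.
From mathcomp Require Import lra.

Set Implicit Arguments.
Unset Strict Implicit.
Unset Printing Implicit Defensive.

Import Order.TTheory GRing.Theory Num.Theory.
Import numFieldNormedType.Exports.
Local Open Scope classical_set_scope.
Local Open Scope ring_scope.

Section Euclidean.
Variable R : realType.
Implicit Types (a b : R).

Lemma dotvC d (p v : 'rV[R]_d) : dotv p v = dotv v p.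
Proof. by apply: eq_bigr => i _; rewrite mulrC. Qed.

Lemma dotvDr d (p u v : 'rV[R]_d) : dotv p (u + v) = dotv p u + dotv p v.
Proof. by rewrite /dotv -big_split; apply: eq_bigr => i _; rewrite !mxE mulrDr. Qed.

Lemma dotvZr d a (p v : 'rV[R]_d) : dotv p (a *: v) = a * dotv p v.
Proof. by rewrite /dotv mulr_sumr; apply: eq_bigr => i _; rewrite !mxE mulrCA. Qed.

Lemma dotvNr d (p v : 'rV[R]_d) : dotv p (- v) = - dotv p v.
Proof. by rewrite -scaleN1r dotvZr mulN1r. Qed.

Lemma dotv0r d (p : 'rV[R]_d) : dotv p 0 = 0.
Proof. by rewrite -(scale0r 0) dotvZr mul0r. Qed.

Lemma dotvDl d (p q v : 'rV[R]_d) : dotv (p + q) v = dotv p v + dotv q v.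
Proof. by rewrite dotvC dotvDr !(dotvC v). Qed.

Lemma dotvZl d a (p v : 'rV[R]_d) : dotv (a *: p) v = a * dotv p v.
Proof. by rewrite dotvC dotvZr dotvC. Qed.

Lemma dotvNl d (p v : 'rV[R]_d) : dotv (- p) v = - dotv p v.
Proof. by rewrite dotvC dotvNr dotvC. Qed.

Lemma dotv_row_mx d1 d2 (a c : 'rV[R]_d1) (b e : 'rV[R]_d2) :
  dotv (row_mx a b) (row_mx c e) = dotv a c + dotv b e.
Proof.
by rewrite /dotv big_split_ord; congr (_ + _); apply: eq_bigr => i _;
  rewrite ?row_mxEl ?row_mxEr.
Qed.

Lemma dotv_scalar a b : dotv (a%:M : 'rV[R]_1) b%:M = a * b.
Proof. by rewrite /dotv big_ord1 !mxE. Qed.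

Lemma enorm0 d : enorm (0 : 'rV[R]_d) = 0.
Proof. by rewrite /enorm dotv0r sqrtr0. Qed.

Lemma dotvv_ge0 d (v : 'rV[R]_d) : 0 <= dotv v v.
Proof. by apply: sumr_ge0 => i _; rewrite -expr2 sqr_ge0. Qed.

Lemma enorm_ge0 d (v : 'rV[R]_d) : 0 <= enorm v.
Proof. exact: sqrtr_ge0. Qed.

Lemma sqr_enorm d (v : 'rV[R]_d) : enorm v ^+ 2 = dotv v v.
Proof. by rewrite sqr_sqrtr ?dotvv_ge0. Qed.

Lemma coord_le_enorm d (v : 'rV[R]_d) i : `|v 0 i| <= enorm v.
Proof.
rewrite -ler_sqr ?nnegrE ?enorm_ge0 // sqr_enorm real_normK ?num_real //.
by rewrite /dotv (bigD1 i) //= expr2 lerDl; apply: sumr_ge0 => j _; rewrite -expr2 sqr_ge0.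
Qed.

Lemma enorm_eq0 d (v : 'rV[R]_d) : enorm v = 0 -> v = 0.
Proof.
move=> v0; apply/rowP => i; rewrite mxE; apply/normr0_eq0/le_anti.
by rewrite normr_ge0 andbT -v0 coord_le_enorm.
Qed.

Lemma enorm_le_sum d (v : 'rV[R]_d) : enorm v <= \sum_i `|v 0 i|.
Proof.
rewrite -ler_sqr ?nnegrE ?enorm_ge0 ?sumr_ge0 // sqr_enorm expr2 mulr_suml.
apply: ler_sum => i _; apply: le_trans (ler_norm _) _; rewrite normrM ler_wpM2l //.
by rewrite (bigD1 i) //= lerDl sumr_ge0.
Qed.

Lemma enormZ d a (v : 'rV[R]_d) : enorm (a *: v) = `|a| * enorm v.
Proof. by rewrite /enorm dotvZl dotvZr mulrA -expr2 sqrtrM ?sqr_ge0 // sqrtr_sqr. Qed.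

Lemma enormN d (v : 'rV[R]_d) : enorm (- v) = enorm v.
Proof. by rewrite -scaleN1r enormZ normrN1 mul1r. Qed.

Lemma dotv_le_enorm d (p v : 'rV[R]_d) : dotv p v <= enorm p * enorm v.
Proof.
have [p0|p0] := eqVneq (enorm p) 0; first by rewrite p0 mul0r (enorm_eq0 p0) dotvC dotv0r.
have [v0|v0] := eqVneq (enorm v) 0; first by rewrite v0 mulr0 (enorm_eq0 v0) dotv0r.
set A := enorm p; set B := enorm v.
have AB0 : 0 < 2 * (A * B) by rewrite !mulr_gt0 // lt_def ?p0 ?v0 enorm_ge0.
rewrite -(ler_pM2l AB0).
have : \sum_i 2 * (A * B) * (p 0 i * v 0 i)
    <= \sum_i (B ^+ 2 * (p 0 i * p 0 i) + A ^+ 2 * (v 0 i * v 0 i)).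
  by apply: ler_sum => i _; have := sqr_ge0 (B * p 0 i - A * v 0 i); nra.
rewrite -mulr_sumr big_split /= -!mulr_sumr -/(dotv p v) -/(dotv p p) -/(dotv v v).
by rewrite -!sqr_enorm -/A -/B; nra.
Qed.

Lemma normr_dotv_le d (p v : 'rV[R]_d) : `|dotv p v| <= enorm p * enorm v.
Proof.
rewrite ler_norml dotv_le_enorm andbT lerNl -dotvNl.
by rewrite -[enorm p]enormN dotv_le_enorm.
Qed.

Lemma enormD d (u v : 'rV[R]_d) : enorm (u + v) <= enorm u + enorm v.
Proof.
rewrite -ler_sqr ?nnegrE ?addr_ge0 ?enorm_ge0 // sqrrD !sqr_enorm.
rewrite dotvDl !dotvDr (dotvC v u).
have := dotv_le_enorm u v; lra.
Qed.

Lemma sqr_enorm_row_mx d1 d2 (a : 'rV[R]_d1) (b : 'rV[R]_d2) :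
  enorm (row_mx a b) ^+ 2 = enorm a ^+ 2 + enorm b ^+ 2.
Proof. by rewrite !sqr_enorm dotv_row_mx. Qed.

Lemma enorm_scalar a : enorm (a%:M : 'rV[R]_1) = `|a|.
Proof. by rewrite /enorm dotv_scalar -expr2 sqrtr_sqr. Qed.

Lemma enorm_row_mxl d1 d2 (a : 'rV[R]_d1) (b : 'rV[R]_d2) :
  enorm a <= enorm (row_mx a b).
Proof.
by rewrite -ler_sqr ?nnegrE ?enorm_ge0 // sqr_enorm_row_mx lerDl sqr_ge0.
Qed.

Lemma enorm_row_mx_le d1 d2 (a : 'rV[R]_d1) (b : 'rV[R]_d2) :
  enorm (row_mx a b) <= enorm a + enorm b.
Proof.
rewrite -ler_sqr ?nnegrE ?addr_ge0 ?enorm_ge0 // sqr_enorm_row_mx sqrrD lerD2r.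
by rewrite lerDl mulrn_wge0 // mulr_ge0 ?enorm_ge0.
Qed.

Lemma row_mx_scalarDZ d (z v : 'rV[R]_d) a b c :
  row_mx z a%:M + c *: row_mx v b%:M = row_mx (z + c *: v) (a + c * b)%:M.
Proof. by rewrite scale_row_mx scale_scalar_mx add_row_mx raddfD. Qed.

Lemma enorm_bounded_cluster d (u : nat -> 'rV[R]_d) B :
  (forall k, enorm (u k) <= B) ->
  exists zeta, forall e (K : nat), 0 < e ->
    exists2 k, (K <= k)%N & enorm (zeta - u k) < e.
Proof.
move=> u_le.
have cube_compact := @rV_compact R d (fun=> `[-B, B]%classic)
  (fun=> @segment_compact R (-B) B).
have u_cube : (u @ \oo) [set v | forall i, `[-B, B]%classic (v 0 i)].
  exists 0%N => // k _ i /=; rewrite in_itv /= -ler_norml.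
  exact: le_trans (coord_le_enorm _ _) (u_le k).
have [zeta [_ zeta_cluster]] := cube_compact (u @ \oo) _ u_cube.
exists zeta => e K e0.
have e'0 : 0 < e / d.+1%:R by rewrite divr_gt0.
have u_tail : (u @ \oo) (u @` [set k | (K <= k)%N]) by exists K => // k Kk; exists k.
have [_ [[k Kk <-] zeta_uk]] := zeta_cluster _ _ u_tail (nbhsx_ballx zeta _ e'0).
exists k => //; apply: le_lt_trans (enorm_le_sum _) _.
apply: (@le_lt_trans _ _ (\sum_(i < d) e / d.+1%:R)).
  apply: ler_sum => i _; rewrite !mxE; apply: ltW.
  by have [_ /(_ 0 i)] := zeta_uk.
rewrite sumr_const card_ord -[_ *+ d]mulr_natr mulrAC ltr_pdivrMr ?ltr0Sn //.
by rewrite ltr_pM2l // ltr_nat.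
Qed.

End Euclidean.

Section Cones.
Variables (R : realType) (n : nat).
Implicit Types (C : set 'rV[R]_n) (c xi : 'rV[R]_n).

Lemma normal_coneZ C c xi a : 0 <= a -> normal_cone C c xi -> normal_cone C c (a *: xi).
Proof. by move=> a0 Nxi zeta Tzeta; rewrite dotvZr mulr_ge0_le0 // Nxi. Qed.

Lemma tangent_coneP C c xi : tangent_cone C c xi <->
  (forall e dl, 0 < e -> 0 < dl -> exists tau xi',
     [/\ 0 < tau < dl, enorm (xi' - xi) < e & C (c + tau *: xi')]).
Proof.
split=> [Txi e dl e0 dl0 | Txi e dl e0 dl0].
  have [tau [/andP[tau0 tau_dl] [x Cx close]]] := Txi e dl e0 dl0.
  exists tau, (tau^-1 *: (x - c)); split; first by rewrite tau0.
    rewrite -(ltr_pM2l tau0) -[X in X * _]gtr0_norm // -enormZ scalerBr scalerA.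
    by rewrite divff ?gt_eqF // scale1r -enormN opprD opprK opprB addrAC mulrC.
  by rewrite scalerA divff ?gt_eqF // scale1r addrC subrK.
have [tau [xi' [/andP[tau0 tau_dl] close Cx]]] := Txi e dl e0 dl0.
exists tau; split; first by rewrite tau0.
exists (c + tau *: xi') => //.
rewrite opprD addrACA subrr add0r -scalerBr enormZ gtr0_norm //.
by rewrite -enormN opprB mulrC ltr_pM2r.
Qed.

End Cones.

Section Epigraph.
Variables (R : realType) (d : nat) (phi : 'rV[R]_d -> \bar R).

Lemma epi_row_mx y s : epi phi (row_mx y s%:M) = (phi y <= s%:E)%E.
Proof. by rewrite /epi /= row_mxKl row_mxKr mxE eqxx mulr1n. Qed.

Variables (z : 'rV[R]_d) (w : R).
Hypothesis phiz : phi z = w%:E.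

Lemma normal_epi_le0 a q :
  normal_cone (epi phi) (row_mx z w%:M) (row_mx a q%:M) -> q <= 0.
Proof.
move=> Nq; have := Nq (row_mx 0 1%:M).
rewrite dotv_row_mx dotv_scalar mul1r dotvC dotv0r add0r; apply.
apply/tangent_coneP => e dl e0 dl0; exists (dl / 2), (row_mx 0 1%:M).
have dl2 : 0 < dl / 2 by rewrite divr_gt0.
rewrite subrr enorm0 e0 row_mx_scalarDZ scaler0 addr0 mulr1 epi_row_mx phiz.
by rewrite lee_fin lerDl ltW // dl2 ltr_pdivrMr // ltr_pMr // ltr1n.
Qed.

Lemma subdiff_lower_bound p e : subdiff phi z p -> 0 < e ->
  exists2 dl, 0 < dl & forall y, enorm (y - z) < dl ->
    ((w + dotv p (y - z) - e * enorm (y - z))%:E <= phi y)%E.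
Proof.
move=> dphi e0; have [dl dl0 near_z] := dphi e e0; exists dl => // y yz_dl.
have [->|yz] := eqVneq y z; first by rewrite subrr enorm0 dotv0r mulr0 !subr0 addr0 phiz.
have yz_pos : 0 < enorm (y - z).
  rewrite lt_def enorm_ge0 andbT; apply: contra yz => /eqP/enorm_eq0/eqP.
  by rewrite subr_eq0.
move: (near_z y); rewrite yz_pos yz_dl phiz => /(_ isT).
case: (phi y) => [a||] /=; last by rewrite !addNye leeNy_eq.
  by rewrite -!EFinD !lee_fin mulNr; lra.
by move=> _; rewrite leey.
Qed.

Lemma subdiff_normal_epi p : subdiff phi z p ->
  normal_cone (epi phi) (row_mx z w%:M) (row_mx p (-1)%:M).
Proof.
move=> dphi xi /tangent_coneP Txi; apply/ler_addgt0Pr => eps eps0; rewrite add0r.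
set nu := row_mx p (-1)%:M; set K := enorm xi + 1 + enorm nu.
have K0 : 0 < K by rewrite /K ltr_wpDr ?enorm_ge0 // ltr_wpDl ?enorm_ge0.
set e := Num.min 1 (eps / K).
have e0 : 0 < e by rewrite lt_min ltr01 divr_gt0.
have e1 : e <= 1 by rewrite ge_min lexx.
have eK : e * K <= eps by rewrite -ler_pdivlMr // ge_min lexx orbT.
have [dl dl0 lower] := subdiff_lower_bound dphi e0.
have [tau [xi' [/andP[tau0 tau_dl] xi'_close epi_point]]] :=
  Txi e (dl / (enorm xi + 1)) e0 (divr_gt0 dl0 (ltr_wpDl (enorm_ge0 _) ltr01)).
set v := lsubmx xi'; set r := rsubmx xi' 0 0.
have xi'E : xi' = row_mx v r%:M by rewrite /v /r -mx11_scalar hsubmxK.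
move: epi_point; rewrite xi'E row_mx_scalarDZ epi_row_mx => epi_point.
have v_le : enorm v <= enorm xi + 1.
  apply: le_trans (enorm_row_mxl _ r%:M) _; rewrite -xi'E.
  rewrite -[xi'](subrK xi) addrC; apply: le_trans (enormD _ _) _.
  by rewrite lerD2l ltW // (lt_le_trans xi'_close).
have step : z + tau *: v - z = tau *: v by rewrite addrC addKr.
have step_dl : enorm (z + tau *: v - z) < dl.
  rewrite step enormZ gtr0_norm //.
  apply: le_lt_trans (ler_wpM2l (ltW tau0) v_le) _.
  by rewrite -ltr_pdivlMr // ltr_wpDl ?enorm_ge0.
have := le_trans (lower _ step_dl) epi_point.
rewrite lee_fin step dotvZr enormZ gtr0_norm // => sub_ineq.
have xi'_nu : dotv xi' nu <= e * (enorm xi + 1).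
  rewrite xi'E dotv_row_mx dotv_scalar dotvC mulrN1.
  apply: le_trans (ler_wpM2l (ltW e0) v_le).
  rewrite -(ler_pM2l tau0); lra.
have diff_nu : dotv (xi - xi') nu <= e * enorm nu.
  apply: le_trans (ler_norm _) (le_trans (normr_dotv_le _ _) _).
  by rewrite ler_wpM2r ?enorm_ge0 // -enormN opprB ltW.
rewrite -[xi](subrK xi') dotvDl addrC; apply: le_trans eK.
by rewrite /K mulrDr lerD.
Qed.

Lemma not_subdiff_seq p : ~ subdiff phi z p ->
  exists2 e, 0 < e & exists Y : nat -> 'rV[R]_d, forall k,
    0 < enorm (Y k - z) < k.+1%:R^-1 /\
    (phi (Y k) <= (w + dotv p (Y k - z) - e * enorm (Y k - z))%:E)%E.
Proof.
move=> not_dphi; apply: contrapT => no_seq; apply: not_dphi => e e0.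
apply: contrapT => no_dl; apply: no_seq; exists e => //.
suff /choice[Y HY] : forall k : nat, exists y, 0 < enorm (y - z) < k.+1%:R^-1 /\
    (phi y <= (w + dotv p (y - z) - e * enorm (y - z))%:E)%E by exists Y.
move=> k; apply: contrapT => no_y; apply: no_dl; exists k.+1%:R^-1 => // y yz.
rewrite leNgt; apply/negP => below; apply: no_y; exists y; split => //.
move: below; rewrite phiz; case: (phi y) => [a||] //=; last by rewrite leNye.
by rewrite -!EFinD lte_fin lee_fin mulNr; lra.
Qed.

Lemma normal_epi_subdiff p :
  normal_cone (epi phi) (row_mx z w%:M) (row_mx p (-1)%:M) -> subdiff phi z p.
Proof.
set nu := row_mx p (-1)%:M => Nnu; apply: contrapT => /not_subdiff_seq[e e0 [Y HY]].
pose rho k := enorm (Y k - z).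
have rho0 k : 0 < rho k by have [/andP[]] := HY k.
pose q k := (rho k)^-1 *: row_mx (Y k - z) (dotv p (Y k - z) - e * rho k)%:M.
have q_le k : enorm (q k) <= 1 + enorm p + e.
  rewrite enormZ gtr0_norm ?invr_gt0 ?rho0 // ler_pdivrMl ?rho0 //.
  apply: le_trans (enorm_row_mx_le _ _) _; rewrite enorm_scalar.
  apply: le_trans (lerD (lexx _) (ler_normB _ _)) _.
  rewrite normrM (gtr0_norm e0) (gtr0_norm (rho0 k)).
  by have := normr_dotv_le p (Y k - z); rewrite -/(rho k); lra.
have q_nu k : dotv (q k) nu = e.
  rewrite dotvZl dotv_row_mx dotv_scalar dotvC mulrN1 opprB addrC subrK.
  by rewrite mulrCA mulVf ?gt_eqF // mulr1.
(* The normalised secants q k cluster at a tangent vector xi with <xi, nu> = e > 0. *)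
have [xi xi_cl] := enorm_bounded_cluster q_le.
have Txi : tangent_cone (epi phi) (row_mx z w%:M) xi.
  apply/tangent_coneP => eps dl eps0 dl0.
  have [K _ Kdl] := near_infty_natSinv_lt (PosNum dl0).
  have [k Kk close] := xi_cl eps K eps0.
  exists (rho k), (q k); split.
  - by have [/andP[_ rho_lt] _] := HY k; rewrite rho0 (lt_trans rho_lt) ?Kdl.
  - by rewrite -enormN opprB.
  rewrite scalerA mulfV ?gt_eqF // scale1r add_row_mx -raddfD addrC subrK.
  by rewrite epi_row_mx addrA; have [_] := HY k.
have nu1 : 0 < enorm nu + 1 by rewrite ltr_wpDl ?enorm_ge0.
have [k _ close] := xi_cl (e / (enorm nu + 1)) 0%N (divr_gt0 e0 nu1).
have small : `|dotv (xi - q k) nu| < e.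
  apply: le_lt_trans (normr_dotv_le _ _) _.
  apply: le_lt_trans (ler_wpM2r (enorm_ge0 nu) (ltW close)) _.
  by rewrite mulrAC ltr_pdivrMr // ltr_pM2l // ltrDl.
have := Nnu xi Txi; rewrite -[xi](subrK (q k)) dotvDl q_nu.
by move: small; rewrite ltr_norml; lra.
Qed.

End Epigraph.

Section Representation.
Variables (R : realType) (N M : nat) (H : R -> 'rV[R]_N -> 'rV[R]_N -> R).
Variables (U : R -> set 'rV[R]_M) (f : R -> 'rV[R]_N -> 'rV[R]_M -> 'rV[R]_N).
Variable l : R -> 'rV[R]_N -> 'rV[R]_M -> R.
Hypothesis rep : representation H U f l.
Variables (t : R) (x : 'rV[R]_N).
Hypothesis t0 : 0 <= t.

Lemma representation_ge p u : U t u -> dotv p (f t x u) - l t x u <= H t x p.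
Proof. by move=> Uu; rewrite -lee_fin (rep _ _ t0); apply: ereal_sup_ubound; exists u. Qed.

Lemma representation_le p c :
  (forall u, U t u -> dotv p (f t x u) - l t x u <= c) -> H t x p <= c.
Proof.
move=> ub; rewrite -lee_fin (rep _ _ t0).
by apply: ge_ereal_sup => _ [u Uu <-]; rewrite lee_fin ub.
Qed.

Lemma representation_nonempty : U t !=set0.
Proof. by apply/set0P/eqP => U0; have := rep x 0 t0; rewrite U0 image_set0 ereal_sup0. Qed.

Lemma representation_l_ge u : U t u -> - H t x 0 <= l t x u.
Proof. by move=> /(representation_ge 0); rewrite dotvC dotv0r add0r lerNl. Qed.

Lemma Hbar_pos p a : 0 < a -> Hbar U f l t x p a = (a * H t x (a^-1 *: p))%:E.
Proof.
move=> a0; rewrite /Hbar EFinM (rep _ _ t0) -(ereal_sup_pZl _ a0) image_comp.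
congr ereal_sup.
apply: eq_imagel => u _ /=; rewrite -EFinM dotvZl mulrBr mulrA mulfV ?gt_eqF //.
by rewrite mul1r.
Qed.

Lemma f_in_domHstar u : U t u -> domHstar H t x (f t x u).
Proof.
move=> Uu; apply: le_lt_trans (ltry (l t x u)).
apply: ge_ereal_sup => _ [q _ <-]; rewrite lee_fin.
by have := representation_ge q Uu; rewrite dotvC; lra.
Qed.

Lemma domHstar_dotv_le v p s : domHstar H t x v ->
  (forall u, U t u -> dotv p (f t x u) <= s) -> dotv v p <= s.
Proof.
move=> vdom ub; rewrite leNgt; apply/negP => gap.
have Hstar_ge lam : 0 <= lam ->
    ((lam * (dotv v p - s) - H t x 0)%:E <= Hstar H t x v)%E.
  move=> lam0; apply: (@le_trans _ _ (dotv v (lam *: p) - H t x (lam *: p))%:E).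
    suff : H t x (lam *: p) <= lam * s + H t x 0 by rewrite lee_fin dotvZr; lra.
    apply: representation_le => u Uu; rewrite dotvZl.
    by have := ler_wpM2l lam0 (ub u Uu); have := representation_l_ge Uu; lra.
  by apply: ereal_sup_ubound; exists (lam *: p).
move: vdom; rewrite /domHstar /=; case eH : (Hstar H t x v) => [h||] // _.
  set lam := (`|h| + `|H t x 0| + 1) / (dotv v p - s).
  have gap0 : 0 < dotv v p - s by rewrite subr_gt0.
  have lam0 : 0 <= lam by apply: divr_ge0 (ltW gap0); rewrite addr_ge0 // addr_ge0.
  have lamE : lam * (dotv v p - s) = `|h| + `|H t x 0| + 1 by rewrite mulfVK ?gt_eqF.
  have := Hstar_ge lam lam0.
  by rewrite eH lee_fin lamE; have := ler_norm h; have := ler_norm (H t x 0); lra.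
by have := Hstar_ge 0 (lexx _); rewrite eH leeNy_eq.
Qed.

Lemma Hbar_zero p :
  Hbar U f l t x p 0 = ereal_sup [set (dotv v p)%:E | v in domHstar H t x].
Proof.
set S := [set (dotv p (f t x u))%:E | u in U t].
have -> : Hbar U f l t x p 0 = ereal_sup S.
  by congr ereal_sup; apply: eq_imagel => u _; rewrite mul0r subr0.
apply/le_anti/andP; split.
  apply: ge_ereal_sup => _ [u Uu <-]; rewrite dotvC.
  by apply: ereal_sup_ubound; exists (f t x u) => //; apply: f_in_domHstar.
apply: ge_ereal_sup => _ [v vdom <-].
have [u0 Uu0] := representation_nonempty.
have ub u : U t u -> ((dotv p (f t x u))%:E <= ereal_sup S)%E.
  by move=> Uu; apply: ereal_sup_ubound; exists u.
move: ub; case: (ereal_sup S) => [s||] ub; last 2 first.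
- exact: leey.
- by have := ub u0 Uu0; rewrite leeNy_eq.
by rewrite lee_fin; apply: domHstar_dotv_le vdom _ => u /ub; rewrite lee_fin.
Qed.

End Representation.

Lemma pt2Z (R : realType) N a t (x : 'rV[R]_N) : a *: pt2 t x = pt2 (a * t) (a *: x).
Proof. by rewrite /pt2 scale_row_mx scale_scalar_mx. Qed.

Section WeakConditions.
Variables (R : realType) (N M : nat) (H : R -> 'rV[R]_N -> 'rV[R]_N -> R).
Variables (U : R -> set 'rV[R]_M) (f : R -> 'rV[R]_N -> 'rV[R]_M -> 'rV[R]_N).
Variable l : R -> 'rV[R]_N -> 'rV[R]_M -> R.
Hypothesis rep : representation H U f l.
Variables (phi : 'rV[R]_(1 + N) -> \bar R) (t : R) (x : 'rV[R]_N) (w : R).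
Hypotheses (t0 : 0 <= t) (phiz : phi (pt2 t x) = w%:E).

Let normal_at xi := normal_cone (epi phi) (row_mx (pt2 t x) w%:M) xi.
Let sup_domHstar px := ereal_sup [set (dotv v (- px))%:E | v in domHstar H t x].

Lemma weak_conditions_equiv (P : \bar R -> Prop) :
  (forall a y, 0 < a -> P y%:E -> P (a * y)%:E) ->
  ((forall pt px, subdiff phi (pt2 t x) (pt2 pt px) -> P (- pt + H t x (- px))%:E) /\
   (forall pt px, normal_at (row_mx (pt2 pt px) 0) -> P ((- pt)%:E + sup_domHstar px)))
  <-> (forall pt px q, normal_at (row_mx (pt2 pt px) q%:M) ->
        P ((- pt)%:E + Hbar U f l t x (- px) (- q))).
Proof.
move=> PZ; split=> [[Psub Pnormal] pt px q Nq | PII].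
  have := normal_epi_le0 phiz Nq; rewrite le_eqVlt => /orP[/eqP q0 | q_neg].
    by move: Nq; rewrite q0 oppr0 raddf0 (Hbar_zero rep) //; apply: Pnormal.
  have nq0 : 0 < - q by rewrite oppr_gt0.
  set a := (- q)^-1.
  have a0 : 0 < a by rewrite invr_gt0.
  have aq : a * q = -1 by rewrite -[q]opprK mulrN mulVf ?gt_eqF.
  have Nsub := normal_coneZ (ltW a0) Nq.
  rewrite scale_row_mx pt2Z scale_scalar_mx aq in Nsub.
  have := PZ _ _ nq0 (Psub _ _ (normal_epi_subdiff phiz Nsub)).
  rewrite (Hbar_pos rep) // -EFinD -/a scalerN mulrDr mulrN mulrA mulfV ?gt_eqF //.
  by rewrite mul1r.
split=> [pt px /(subdiff_normal_epi phiz) Nsub | pt px Nq].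
  by have := PII _ _ _ Nsub; rewrite opprK (Hbar_pos rep) // invr1 scale1r mul1r EFinD.
by have := PII pt px 0; rewrite raddf0 oppr0 (Hbar_zero rep) //; apply.
Qed.

Lemma boundary_conditions_equiv :
  ((forall pt px, subdiff phi (pt2 t x) (pt2 pt px) -> 0 <= - pt + H t x (- px)) /\
   (forall pt px, normal_at (row_mx (pt2 pt px) 0) ->
      (0 <= (- pt)%:E + sup_domHstar px)%E))
  <-> (forall pt px q, normal_at (row_mx (pt2 pt px) q%:M) ->
        (0 <= (- pt)%:E + Hbar U f l t x (- px) (- q))%E).
Proof.
rewrite -(weak_conditions_equiv (P := fun y => 0%:E <= y)%E); last first.
  by move=> a y a0; rewrite !lee_fin; apply: mulr_ge0 (ltW a0).
by split=> -[Psub Pnormal]; split=> // pt px /Psub; rewrite lee_fin.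
Qed.

Lemma interior_conditions_equiv :
  ((forall pt px, subdiff phi (pt2 t x) (pt2 pt px) -> - pt + H t x (- px) = 0) /\
   (forall pt px, normal_at (row_mx (pt2 pt px) 0) ->
      ((- pt)%:E + sup_domHstar px = 0)%E))
  <-> (forall pt px q, normal_at (row_mx (pt2 pt px) q%:M) ->
        ((- pt)%:E + Hbar U f l t x (- px) (- q) = 0)%E).
Proof.
rewrite -(weak_conditions_equiv (P := fun y => y = 0%:E)); last first.
  by move=> a y _ [->]; rewrite mulr0.
split=> -[Psub Pnormal]; split=> // pt px /Psub; first by move->.
by case.
Qed.

End WeakConditions.

Lemma Wext_pt2_fineK (R : realType) N (A : set 'rV[R]_N)
    (W : R -> 'rV[R]_N -> \bar R) t x :
  (forall t x, 0 <= t -> A x -> W t x != -oo%E) ->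
  (Wext A W (pt2 t x) < +oo)%E -> Wext A W (pt2 t x) = (fine (Wext A W (pt2 t x)))%:E.
Proof.
move=> Wnoo; rewrite /Wext /pt2 row_mxKl row_mxKr mxE eqxx mulr1n.
by case: asboolP => // -[t0 Ax] Wfin; rewrite fineK // fin_numE Wnoo // lt_eqF.
Qed.

Theorem proposition4p3 (R : realType) (N M : nat) (A : set 'rV[R]_N)
  (H : R -> 'rV[R]_N -> 'rV[R]_N -> R) (U : R -> set 'rV[R]_M)
  (f : R -> 'rV[R]_N -> 'rV[R]_M -> 'rV[R]_N) (l : R -> 'rV[R]_N -> 'rV[R]_M -> R) :
  A !=set0 -> closed A -> hpp A U f l -> representation H U f l ->
  forall W : R -> 'rV[R]_N -> \bar R,
    (forall t x, 0 <= t -> A x -> W t x != -oo%E) ->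
    (weak_solution_I A W H <-> weak_solution_II A W U f l).
Proof.
move=> _ _ _ rep W Wnoo.
split=> -[lsc [C [C_full sol]]]; split=> //; exists C; split=> // t x Ct Wfin.
all: have t0 : 0 <= t by case: C_full => /(_ t Ct); rewrite /= in_itv /= andbT => /ltW.
all: have Wz := Wext_pt2_fineK Wnoo Wfin.
all: have [sol_bd sol_int] := sol t x Ct Wfin.
all: by split=> [/sol_bd/(boundary_conditions_equiv rep t0 Wz)
                |/sol_int/(interior_conditions_equiv rep t0 Wz)].
Qed.
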